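(* Let $(D,\prec,\succ,\alpha)$ be a Hom-dendriform algebra, $(V,\prec_l,\succ_l,\prec_r,\succ_r,\beta)$ a representation of it, and $T:V\to D$ a relative averaging operator with respect to this representation. Define on $V$: $u\prec^T_\vdash v=T(u)\prec_l v$, $u\prec^T_\dashv v=u\prec_r T(v)$, $u\succ^T_\vdash v=T(u)\succ_l v$, $u\succ^T_\dashv v=u\succ_r T(v)$ for $u,v\in V$. Then $(V,\prec^T_\vdash,\prec^T_\dashv,\succ^T_\vdash,\succ^T_\dashv,\beta)$ is a Hom-quadri-dendriform algebra. Moreover, $T$ is a homomorphism from it to the Hom-dendriform algebra $(D,\prec,\succ,\alpha)$, i.e. $T(u\prec^T_\vdash v)=T(u\prec^T_\dashv v)=Tu\prec Tv$, $T(u\succ^T_\vdash v)=T(u\succ^T_\dashv v)=Tu\succ Tv$ for all $u,v\in V$, and $T\circ\beta=\alpha\circ T$.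
   Context: All vector spaces are over a field of characteristic zero. A Hom-dendriform algebra is $(D,\prec,\succ,\alpha)$ with $\prec,\succ$ bilinear on $D$ and $\alpha:D\to D$ linear such that for all $x,y,z$: $\alpha(x)\prec(y\prec z+y\succ z)=(x\prec y)\prec\alpha(z)$; $\alpha(x)\succ(y\prec z)=(x\succ y)\prec\alpha(z)$; $\alpha(x)\succ(y\succ z)=(x\prec y+x\succ y)\succ\alpha(z)$. A representation of $(D,\prec,\succ,\alpha)$ is a vector space $V$ with a linear map $\beta:V\to V$ and bilinear maps $\prec_l,\succ_l:D\times V\to V$, $\prec_r,\succ_r:V\times D\to V$ such that for all $x,y\in D$, $m\in V$: $(x\prec y)\prec_l\beta(m)=\alpha(x)\prec_l(y\prec_l m+y\succ_l m)$; $(x\succ y)\prec_l\beta(m)=\alpha(x)\succ_l(y\prec_l m)$; $\alpha(x)\succ_l(y\succ_l m)=(x\prec y+x\succ y)\succ_l\beta(m)$; $\beta(m)\prec_r(x\prec y+x\succ y)=(m\prec_r x)\prec_r\alpha(y)$; $\beta(m)\succ_r(x\prec y)=(m\succ_r x)\prec_r\alpha(y)$; $(m\prec_r x+m\succ_r x)\succ_r\alpha(y)=\beta(m)\succ_r(x\succ y)$; $(x\prec_l m)\prec_r\alpha(y)=\alpha(x)\prec_l(m\prec_r y+m\succ_r y)$; $(x\succ_l m)\prec_r\alpha(y)=\alpha(x)\succ_l(m\prec_r y)$; $(x\prec_l m+x\succ_l m)\succ_r\alpha(y)=\alpha(x)\succ_l(m\succ_r y)$. A relative averaging operator is a linear map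 $T:V\to D$ with $Tu\prec Tv=T(Tu\prec_l v)=T(u\prec_r Tv)$, $Tu\succ Tv=T(Tu\succ_l v)=T(u\succ_r Tv)$ for all $u,v\in V$, and $T\circ\beta=\alpha\circ T$. A Hom-quadri-dendriform algebra is a tuple $(E,\prec_\vdash,\prec_\dashv,\succ_\vdash,\succ_\dashv,\gamma)$ with four bilinear operations on $E$ and $\gamma:E\to E$ linear such that for all $x,y,z\in E$: (Q1) $(x\prec_\vdash y)\prec_\vdash\gamma(z)=(x\prec_\dashv y)\prec_\vdash\gamma(z)=\gamma(x)\prec_\vdash(y\prec_\vdash z+y\succ_\vdash z)$; (Q2) $(x\succ_\vdash y)\prec_\vdash\gamma(z)=(x\succ_\dashv y)\prec_\vdash\gamma(z)=\gamma(x)\succ_\vdash(y\prec_\vdash z)$; (Q3) $\gamma(x)\succ_\vdash(y\succ_\vdash z)=(x\prec_\vdash y+x\succ_\vdash y)\succ_\vdash\gamma(z)=(x\prec_\dashv y+x\succ_\dashv y)\succ_\vdash\gamma(z)$; (Q4) $\gamma(x)\succ_\vdash(y\succ_\vdash z)=(x\prec_\dashv y+x\succ_\vdash y)\succ_\vdash\gamma(z)=(x\prec_\vdash y+x\succ_\dashv y)\succ_\vdash\gamma(z)$; (Q5) $(x\prec_\vdash y)\prec_\dashv\gamma(z)=\gamma(x)\prec_\vdash(y\prec_\dashv z+y\succ_\dashv z)$; (Q6) $(x\succ_\vdash y)\prec_\dashv\gamma(z)=\gamma(x)\succ_\vdash(y\prec_\dashv z)$; (Q7) $\gamma(x)\succ_\vdash(y\succ_\dashv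 z)=(x\prec_\vdash y+x\succ_\vdash y)\succ_\dashv\gamma(z)$; (Q8) $(x\prec_\dashv y)\prec_\dashv\gamma(z)=\gamma(x)\prec_\dashv(y\prec_\vdash z+y\succ_\vdash z)=\gamma(x)\prec_\dashv(y\prec_\dashv z+y\succ_\dashv z)$; (Q9) $(x\prec_\dashv y)\prec_\dashv\gamma(z)=\gamma(x)\prec_\dashv(y\prec_\vdash z+y\succ_\dashv z)=\gamma(x)\prec_\dashv(y\prec_\dashv z+y\succ_\vdash z)$; (Q10) $(x\succ_\dashv y)\prec_\dashv\gamma(z)=\gamma(x)\succ_\dashv(y\prec_\vdash z)=\gamma(x)\succ_\dashv(y\prec_\dashv z)$; (Q11) $\gamma(x)\succ_\dashv(y\succ_\vdash z)=\gamma(x)\succ_\dashv(y\succ_\dashv z)=(x\prec_\dashv y+x\succ_\dashv y)\succ_\dashv\gamma(z)$. *)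

From mathcomp Require Import all_boot all_algebra.
Set Implicit Arguments. Unset Strict Implicit. Unset Printing Implicit Defensive.
Import GRing.Theory.
Local Open Scope ring_scope.

Section Defs.
Variable K : fieldType.

Definition is_lin (U W : lmodType K) (f : U -> W) : Prop :=
  forall (a : K) (x y : U), f (a *: x + y) = a *: f x + f y.

Definition is_bilin (U W X : lmodType K) (f : U -> W -> X) : Prop :=
  (forall (a : K) (x y : U) (z : W), f (a *: x + y) z = a *: f x z + f y z) /\
  (forall (a : K) (x : U) (y z : W), f x (a *: y + z) = a *: f x y + f x z).

Definition HomDendriform (D : lmodType K) (prec succ : D -> D -> D) (alpha : D -> D) : Prop :=
  (is_bilin prec /\ is_bilin succ /\ is_lin alpha /\
  (forall x y z : D,
  (prec (alpha x) (prec y z + succ y z) = prec (prec x y) (alpha z) /\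
      succ (alpha x) (prec y z) = prec (succ x y) (alpha z) /\
      succ (alpha x) (succ y z) = succ (prec x y + succ x y) (alpha z)))).

Definition HomDendRep (D V : lmodType K) (prec succ : D -> D -> D) (alpha : D -> D)
  (precl succl : D -> V -> V) (precr succr : V -> D -> V) (beta : V -> V) : Prop :=
  (is_bilin precl /\ is_bilin succl /\ is_bilin precr /\ is_bilin succr /\ is_lin beta /\
  (forall (x y : D) (m : V),
  (precl (prec x y) (beta m) = precl (alpha x) (precl y m + succl y m) /\
      precl (succ x y) (beta m) = succl (alpha x) (precl y m) /\
      succl (alpha x) (succl y m) = succl (prec x y + succ x y) (beta m) /\
      precr (beta m) (prec x y + succ x y) = precr (precr m x) (alpha y) /\
      succr (beta m) (prec x y) = precr (succr m x) (alpha y) /\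
      succr (precr m x + succr m x) (alpha y) = succr (beta m) (succ x y) /\
      precr (precl x m) (alpha y) = precl (alpha x) (precr m y + succr m y) /\
      precr (succl x m) (alpha y) = succl (alpha x) (precr m y) /\
      succr (precl x m + succl x m) (alpha y) = succl (alpha x) (succr m y)))).

Definition RelAveragingOp (D V : lmodType K) (prec succ : D -> D -> D) (alpha : D -> D)
  (precl succl : D -> V -> V) (precr succr : V -> D -> V) (beta : V -> V) (T : V -> D) : Prop :=
  is_lin T /\
  (forall u v : V, prec (T u) (T v) = T (precl (T u) v) /\ prec (T u) (T v) = T (precr u (T v))) /\
  (forall u v : V, succ (T u) (T v) = T (succl (T u) v) /\ succ (T u) (T v) = T (succr u (T v))) /\
  (forall u : V, T (beta u) = alpha (T u)).

(* Hom-quadri-dendriform algebra (E, pv, pd, sv, sd, gamma):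
   pv = prec_vdash, pd = prec_dashv, sv = succ_vdash, sd = succ_dashv. *)
Definition HomQuadriDendriform (E : lmodType K) (pv pd sv sd : E -> E -> E) (gamma : E -> E) : Prop :=
  (is_bilin pv /\ is_bilin pd /\ is_bilin sv /\ is_bilin sd /\ is_lin gamma /\
  (forall x y z : E,
  (
      pv (pv x y) (gamma z) = pv (pd x y) (gamma z) /\
      pv (pd x y) (gamma z) = pv (gamma x) (pv y z + sv y z) /\
      pv (sv x y) (gamma z) = pv (sd x y) (gamma z) /\
      pv (sd x y) (gamma z) = sv (gamma x) (pv y z) /\
      sv (gamma x) (sv y z) = sv (pv x y + sv x y) (gamma z) /\
      sv (pv x y + sv x y) (gamma z) = sv (pd x y + sd x y) (gamma z) /\
      sv (gamma x) (sv y z) = sv (pd x y + sv x y) (gamma z) /\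
      sv (pd x y + sv x y) (gamma z) = sv (pv x y + sd x y) (gamma z) /\
      pd (pv x y) (gamma z) = pv (gamma x) (pd y z + sd y z) /\
      pd (sv x y) (gamma z) = sv (gamma x) (pd y z) /\
      sv (gamma x) (sd y z) = sd (pv x y + sv x y) (gamma z) /\
      pd (pd x y) (gamma z) = pd (gamma x) (pv y z + sv y z) /\
      pd (gamma x) (pv y z + sv y z) = pd (gamma x) (pd y z + sd y z) /\
      pd (pd x y) (gamma z) = pd (gamma x) (pv y z + sd y z) /\
      pd (gamma x) (pv y z + sd y z) = pd (gamma x) (pd y z + sv y z) /\
      pd (sd x y) (gamma z) = sd (gamma x) (pv y z) /\
      sd (gamma x) (pv y z) = sd (gamma x) (pd y z) /\
      sd (gamma x) (sv y z) = sd (gamma x) (sd y z) /\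
      sd (gamma x) (sd y z) = sd (pd x y + sd x y) (gamma z)))).

End Defs.

From mathcomp Require Import all_boot all_algebra.
Import GRing.Theory.
Local Open Scope ring_scope.
Set Implicit Arguments.

(** Since [T] intertwines each of the four new products on [V] with the
    corresponding product of [D], and [beta] with [alpha], applying [T] inside
    the left argument of [precl], [succl] (resp. the right argument of [precr],
    [succr]) turns every Hom-quadri-dendriform identity either into a tautology
    or into one of the nine representation axioms instantiated at
    [(T x, T y, z)], [(T x, y, T z)] or [(x, T y, T z)]. *)

Section Bilinear.
Variable K : fieldType.

Lemma is_linD (U W : lmodType K) (f : U -> W) :
  is_lin f -> forall x y, f (x + y) = f x + f y.
Proof. by move=> f_lin x y; have := f_lin 1 x y; rewrite !scale1r. Qed.

Lemma is_bilin_compl (U U' W X : lmodType K) (f : U -> W -> X) (g : U' -> U) :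
  is_bilin f -> is_lin g -> is_bilin (fun u v => f (g u) v).
Proof. by move=> [fl fr] g_lin; split=> *; rewrite ?g_lin ?fl ?fr. Qed.

Lemma is_bilin_compr (U W W' X : lmodType K) (f : U -> W -> X) (g : W' -> W) :
  is_bilin f -> is_lin g -> is_bilin (fun u v => f u (g v)).
Proof. by move=> [fl fr] g_lin; split=> *; rewrite ?g_lin ?fl ?fr. Qed.

End Bilinear.

Section RelativeAveraging.
Variables (K : fieldType) (D V : lmodType K).
Variables (prec succ : D -> D -> D) (alpha : D -> D).
Variables (precl succl : D -> V -> V) (precr succr : V -> D -> V) (beta : V -> V).
Variable T : V -> D.
Hypothesis rep : HomDendRep prec succ alpha precl succl precr succr beta.
Hypothesis avg : RelAveragingOp prec succ alpha precl succl precr succr beta T.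

Lemma averaging_precl u v : T (precl (T u) v) = prec (T u) (T v).
Proof. by case: avg => _ [/(_ u v) [-> _] _]. Qed.

Lemma averaging_precr u v : T (precr u (T v)) = prec (T u) (T v).
Proof. by case: avg => _ [/(_ u v) [_ ->] _]. Qed.

Lemma averaging_succl u v : T (succl (T u) v) = succ (T u) (T v).
Proof. by case: avg => _ [_ [/(_ u v) [-> _] _]]. Qed.

Lemma averaging_succr u v : T (succr u (T v)) = succ (T u) (T v).
Proof. by case: avg => _ [_ [/(_ u v) [_ ->] _]]. Qed.

Lemma averaging_beta u : T (beta u) = alpha (T u).
Proof. by case: avg => _ [_ [_ ->]]. Qed.

Lemma averaging_quadri_dendriform :
  HomQuadriDendriform
    (fun u v => precl (T u) v) (fun u v => precr u (T v))
    (fun u v => succl (T u) v) (fun u v => succr u (T v)) beta.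
Proof.
case: rep => [precl_bilin [succl_bilin [precr_bilin [succr_bilin [beta_lin axioms]]]]].
have precl_prec x y m := (axioms x y m).1.
have precl_succ x y m := (axioms x y m).2.1.
have succl_succl x y m := (axioms x y m).2.2.1.
have precr_prec_succ x y m := (axioms x y m).2.2.2.1.
have succr_prec x y m := (axioms x y m).2.2.2.2.1.
have succr_precr_succr x y m := (axioms x y m).2.2.2.2.2.1.
have precr_precl x y m := (axioms x y m).2.2.2.2.2.2.1.
have precr_succl x y m := (axioms x y m).2.2.2.2.2.2.2.1.
have succr_precl_succl x y m := (axioms x y m).2.2.2.2.2.2.2.2.
have T_lin : is_lin T by case: avg.
split; first exact: is_bilin_compl.
split; first exact: is_bilin_compr.
split; first exact: is_bilin_compl.
split; first exact: is_bilin_compr.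
split=> // x y z.
rewrite !(is_linD T_lin) !averaging_precl !averaging_precr !averaging_succl
        !averaging_succr !averaging_beta.
(* [repeat split] closes the halves that have become syntactic tautologies. *)
repeat split.
- exact: precl_prec.
- exact: precl_succ.
- exact: succl_succl.
- exact: succl_succl.
- exact: precr_precl.
- exact: precr_succl.
- symmetry; exact: succr_precl_succl.
- symmetry; exact: precr_prec_succ.
- symmetry; exact: precr_prec_succ.
- symmetry; exact: succr_prec.
- symmetry; exact: succr_precr_succr.
Qed.

End RelativeAveraging.

Theorem proposition3p11 (K : fieldType) (charK0 : [pchar K] =i pred0)
  (D V : lmodType K) (prec succ : D -> D -> D) (alpha : D -> D)
  (precl succl : D -> V -> V) (precr succr : V -> D -> V) (beta : V -> V)
  (T : V -> D) :
  HomDendriform prec succ alpha ->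
  HomDendRep prec succ alpha precl succl precr succr beta ->
  RelAveragingOp prec succ alpha precl succl precr succr beta T ->
  HomQuadriDendriform
    (fun u v => precl (T u) v) (fun u v => precr u (T v))
    (fun u v => succl (T u) v) (fun u v => succr u (T v)) beta /\
  (forall u v : V,
     [/\ T (precl (T u) v) = T (precr u (T v)),
         T (precr u (T v)) = prec (T u) (T v),
         T (succl (T u) v) = T (succr u (T v)) &
         T (succr u (T v)) = succ (T u) (T v)]) /\
  (forall u : V, T (beta u) = alpha (T u)).
Proof.
move=> _ rep avg; split; first exact: averaging_quadri_dendriform rep avg.
split=> [u v|]; last exact: averaging_beta avg.
by rewrite !(averaging_precl avg) !(averaging_precr avg)
           !(averaging_succl avg) !(averaging_succr avg).
Qed.
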